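(* For all sufficiently large $K>0$ the following hold: for every $x\in X$, $\mathcal L_x(\Lambda_K^x)\subset\Lambda_{\zeta K}^{fx}$; and there is a constant $M=M(K)<\infty$ such that for every $x\in X$, the diameter of $\mathcal L_x(\Lambda_K^x)$ with respect to the Hilbert projective metric of the cone $\Lambda_K^{fx}$ is at most $M$.
   Context: Standing setting. $X$ and $Y$ are compact connected Riemannian manifolds, $X\times Y$ has the metric $d((x,y),(x',y'))=d_X(x,x')+d_Y(y,y')$. $F(x,y)=(f(x),g_x(y))$ is a skew product which is a Lipschitz local homeomorphism; $Y_x=\{x\}\times Y$ is identified with $Y$. $f$ is uniformly expanding: there are $\gamma>1$, $\delta_f>0$ with $d_X(fx,fx')\ge\gamma d_X(x,x')$ whenever $d_X(x,x')\le\delta_f$. Every $y$ has exactly $d$ preimages under each $g_x$. There is a continuous function $L(\cdot,\cdot)$ such that each $z$ has a neighbourhood $U_z$ on which $F$ is injective and the inverse of $F|_{U_z}$ is $L(z)$-Lipschitz on $F(U_z)$. There are $L\ge1$ and open $\mathcal A\subset X\times Y$ with: (A1) $L(z)\le L$ on $\mathcal A$ and $L(z)<\gamma^{-1}$ off $\mathcal A$; (A2) a finite cover $\mathcal U$ of $X\times Y$ by open sets on which $F$ is injective, with $\mathcal A$ covered by $q<d$ elements of $\mathcal U$ and each element of $\mathcal U$ meeting at most one curve of $F^{-1}(c)$ for every distance-minimizing geodesic $c$. The potential $\varphi$ is $\alpha$-Hölder ($0<\alpha<1$), $|\varphi|_\alpha=\sup_{z\ne z'}|\varphi(z)-\varphi(z')|/d(z,z')^\alpha$,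 satisfying (P): $\sup\varphi-\inf\varphi<\varepsilon_\varphi$ and $|e^\varphi|_\alpha<\varepsilon_\varphi e^{\inf\varphi}$, where $\varepsilon_\varphi>0$ satisfies $s:=e^{\varepsilon_\varphi}\frac{(d-q)\gamma^{-\alpha}+qL^\alpha}{d}<1$ and $\zeta:=s+2s\varepsilon_\varphi\,\mathrm{diam}(Y)^\alpha<1$. Fiberwise operator: $\mathcal L_x\colon C(Y_x)\to C(Y_{fx})$, $\mathcal L_x\psi(y)=\sum_{\bar y\in g_x^{-1}(y)}e^{\varphi(x,\bar y)}\psi(\bar y)$. Cones: for $K>0$ and $x\in X$, $\Lambda_K^x=\{\psi\colon Y_x\to(0,\infty)\ \alpha\text{-Hölder}: |\psi|_\alpha\le K\inf\psi\}\cup\{0\}$. For a cone $\Lambda$, write $\phi\preceq\psi$ iff $\psi-\phi\in\Lambda\cup\{0\}$; $A(\phi,\psi)=\sup\{t>0:t\phi\preceq\psi\}$, $B(\phi,\psi)=\inf\{t>0:\psi\preceq t\phi\}$, and the Hilbert projective metric is $\Theta(\phi,\psi)=\log(B/A)$. *)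

From Stdlib Require Import Reals Lra List.
From Coquelicot Require Import Coquelicot.
Open Scope R_scope.
Set Implicit Arguments.

Definition metric_space {T : Type} (dist : T -> T -> R) : Prop :=
  (forall x y, 0 <= dist x y) /\
  (forall x y, dist x y = 0 <-> x = y) /\
  (forall x y, dist x y = dist y x) /\
  (forall x y z, dist x z <= dist x y + dist y z).

Definition open_in {T : Type} (dist : T -> T -> R) (U : T -> Prop) : Prop :=
  forall x, U x -> exists e, 0 < e /\ forall y, dist x y < e -> U y.

Definition seq_converges {T : Type} (dist : T -> T -> R) (u : nat -> T) (l : T) : Prop :=
  forall e, 0 < e -> exists N, forall n, (N <= n)%nat -> dist (u n) l < e.

(* sequential compactness (equivalent to compactness for metric spaces) *)
Definition compact_space {T : Type} (dist : T -> T -> R) : Prop :=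
  forall u : nat -> T, exists (phi : nat -> nat) (l : T),
    (forall n, (phi n < phi (S n))%nat) /\ seq_converges dist (fun n => u (phi n)) l.

Definition connected_space {T : Type} (dist : T -> T -> R) : Prop :=
  forall U V : T -> Prop, open_in dist U -> open_in dist V ->
    (forall x, U x -> V x -> False) -> (forall x, U x \/ V x) ->
    (forall x, U x) \/ (forall x, V x).

Definition cont_at {S T : Type} (dS : S -> S -> R) (dT : T -> T -> R) (h : S -> T) (x : S) : Prop :=
  forall e, 0 < e -> exists de, 0 < de /\ forall y, dS x y < de -> dT (h x) (h y) < e.

Definition lipschitz {S T : Type} (dS : S -> S -> R) (dT : T -> T -> R) (h : S -> T) : Prop :=
  exists C, forall x y, dT (h x) (h y) <= C * dS x y.

Definition in01 (t : R) : Prop := 0 <= t <= 1.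

Definition min_geodesic {T : Type} (dist : T -> T -> R) (c : R -> T) : Prop :=
  forall s t, in01 s -> in01 t -> dist (c s) (c t) = Rabs (s - t) * dist (c 0) (c 1).

Definition geodesic_space {T : Type} (dist : T -> T -> R) : Prop :=
  forall a b, exists c : R -> T, min_geodesic dist c /\ c 0 = a /\ c 1 = b.

(* x^a with the convention 0^a = 0 (a > 0 throughout) *)
Definition rpow (x a : R) : R := if Rlt_dec 0 x then Rpower x a else 0.

Definition prod_dist {X Y : Type} (dX : X -> X -> R) (dY : Y -> Y -> R)
  (z z' : X * Y) : R := dX (fst z) (fst z') + dY (snd z) (snd z').

Definition skewF {X Y : Type} (f : X -> X) (g : X -> Y -> Y) (z : X * Y) : X * Y :=
  (f (fst z), g (fst z) (snd z)).

Definition sup_fun {T : Type} (h : T -> R) : Rbar := Lub_Rbar (fun r => exists z, r = h z).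
Definition inf_fun {T : Type} (h : T -> R) : Rbar := Glb_Rbar (fun r => exists z, r = h z).

Definition diam {T : Type} (dist : T -> T -> R) : R :=
  real (Lub_Rbar (fun r => exists a b, r = dist a b)).

Definition holder {T : Type} (dist : T -> T -> R) (alpha : R) (h : T -> R) : Prop :=
  exists C, forall z z', z <> z' -> Rabs (h z - h z') <= C * rpow (dist z z') alpha.

Definition holder_semi {T : Type} (dist : T -> T -> R) (alpha : R) (h : T -> R) : Rbar :=
  Lub_Rbar (fun r => exists z z', z <> z' /\ r = Rabs (h z - h z') / rpow (dist z z') alpha).

Definition cont_on01 {T : Type} (dist : T -> T -> R) (c : R -> T) : Prop :=
  forall t, in01 t -> forall e, 0 < e -> exists de, 0 < de /\
    forall t', in01 t' -> Rabs (t - t') < de -> dist (c t) (c t') < e.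

(* a curve of F^{-1}(c): a continuous lift of c through F on [0,1] *)
Definition lift_of {X Y : Type} (dX : X -> X -> R) (dY : Y -> Y -> R)
  (f : X -> X) (g : X -> Y -> Y) (c gm : R -> X * Y) : Prop :=
  cont_on01 (prod_dist dX dY) gm /\ forall t, in01 t -> skewF f g (gm t) = c t.

Definition s_const (d q : nat) (gamma Lc alpha eps : R) : R :=
  exp eps * ((INR d - INR q) * rpow gamma (- alpha) + INR q * rpow Lc alpha) / INR d.

Definition zeta_const {Y : Type} (dY : Y -> Y -> R) (d q : nat) (gamma Lc alpha eps : R) : R :=
  s_const d q gamma Lc alpha eps
  + 2 * s_const d q gamma Lc alpha eps * eps * rpow (diam dY) alpha.

Record Setting {X Y : Type} (dX : X -> X -> R) (dY : Y -> Y -> R)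
  (f : X -> X) (g : X -> Y -> Y) (d : nat) (preim : X -> Y -> list Y)
  (Lz : X * Y -> R) (gamma deltaf Lc : R) (A : X * Y -> Prop)
  (N : nat) (Ucov : nat -> X * Y -> Prop) (q : nat) (Aidx : list nat)
  (alpha : R) (phi : X * Y -> R) (eps : R) : Prop := {
  sX_metric : metric_space dX;
  sY_metric : metric_space dY;
  sX_compact : compact_space dX;
  sY_compact : compact_space dY;
  sX_connected : connected_space dX;
  sY_connected : connected_space dY;
  sX_geodesic : geodesic_space dX;
  sY_geodesic : geodesic_space dY;
  sF_lip : lipschitz (prod_dist dX dY) (prod_dist dX dY) (skewF f g);
  sF_localhomeo : forall z, exists U : X * Y -> Prop,
      open_in (prod_dist dX dY) U /\ U z /\
      (forall w w', U w -> U w' -> skewF f g w = skewF f g w' -> w = w') /\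
      open_in (prod_dist dX dY) (fun v => exists w, U w /\ v = skewF f g w) /\
      (forall w, U w -> forall e, 0 < e -> exists de, 0 < de /\
          forall w', U w' -> prod_dist dX dY (skewF f g w) (skewF f g w') < de ->
             prod_dist dX dY w w' < e);
  s_gamma : 1 < gamma;
  s_deltaf : 0 < deltaf;
  s_expanding : forall x x', dX x x' <= deltaf -> gamma * dX x x' <= dX (f x) (f x');
  s_preim : forall x y, NoDup (preim x y) /\ length (preim x y) = d /\
      (forall y', g x y' = y <-> In y' (preim x y));
  sL_cont : forall z, cont_at (prod_dist dX dY) (fun a b => Rabs (a - b)) Lz z;
  sL_branch : forall z, exists U : X * Y -> Prop,
      open_in (prod_dist dX dY) U /\ U z /\
      (forall w w', U w -> U w' -> skewF f g w = skewF f g w' -> w = w') /\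
      (forall w w', U w -> U w' ->
         prod_dist dX dY w w' <= Lz z * prod_dist dX dY (skewF f g w) (skewF f g w'));
  s_Lc : 1 <= Lc;
  s_A_open : open_in (prod_dist dX dY) A;
  s_A1_in : forall z, A z -> Lz z <= Lc;
  s_A1_out : forall z, ~ A z -> Lz z < / gamma;
  s_U_open : forall i, (i < N)%nat -> open_in (prod_dist dX dY) (Ucov i);
  s_U_inj : forall i, (i < N)%nat -> forall w w', Ucov i w -> Ucov i w' ->
      skewF f g w = skewF f g w' -> w = w';
  s_U_cover : forall z, exists i, (i < N)%nat /\ Ucov i z;
  s_Aidx : NoDup Aidx /\ length Aidx = q /\ (forall i, In i Aidx -> (i < N)%nat);
  s_A_cov : forall z, A z -> exists i, In i Aidx /\ Ucov i z;
  s_q : (q < d)%nat;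
  s_geod_lift : forall i, (i < N)%nat -> forall c : R -> X * Y,
      min_geodesic (prod_dist dX dY) c ->
      forall g1 g2 : R -> X * Y,
        lift_of dX dY f g c g1 -> lift_of dX dY f g c g2 ->
        (exists t, in01 t /\ Ucov i (g1 t)) -> (exists t, in01 t /\ Ucov i (g2 t)) ->
        forall t, in01 t -> g1 t = g2 t;
  s_alpha : 0 < alpha < 1;
  s_phi_holder : holder (prod_dist dX dY) alpha phi;
  s_eps : 0 < eps;
  s_P1 : Rbar_lt (Rbar_minus (sup_fun phi) (inf_fun phi)) (Finite eps);
  s_P2 : Rbar_lt (holder_semi (prod_dist dX dY) alpha (fun z => exp (phi z)))
                 (Finite (eps * exp (real (inf_fun phi))));
  s_s : s_const d q gamma Lc alpha eps < 1;
  s_zeta : zeta_const dY d q gamma Lc alpha eps < 1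
}.

Definition Lop {X Y : Type} (preim : X -> Y -> list Y) (phi : X * Y -> R)
  (x : X) (psi : Y -> R) : Y -> R :=
  fun y => fold_right (fun yb acc => exp (phi (x, yb)) * psi yb + acc) 0 (preim x y).

Definition cone {Y : Type} (dY : Y -> Y -> R) (alpha K : R) (psi : Y -> R) : Prop :=
  ((forall y, 0 < psi y) /\ holder dY alpha psi /\
     Rbar_le (holder_semi dY alpha psi) (Rbar_mult (Finite K) (inf_fun psi)))
  \/ (forall y, psi y = 0).

Definition cone_le {Y : Type} (Lam : (Y -> R) -> Prop) (p1 p2 : Y -> R) : Prop :=
  Lam (fun y => p2 y - p1 y) \/ (forall y, p2 y - p1 y = 0).

Definition hA {Y : Type} (Lam : (Y -> R) -> Prop) (p1 p2 : Y -> R) : Rbar :=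
  Lub_Rbar (fun t => 0 < t /\ cone_le Lam (fun y => t * p1 y) p2).

Definition hB {Y : Type} (Lam : (Y -> R) -> Prop) (p1 p2 : Y -> R) : Rbar :=
  Glb_Rbar (fun t => 0 < t /\ cone_le Lam p2 (fun y => t * p1 y)).

Definition hilbert_theta {Y : Type} (Lam : (Y -> R) -> Prop) (p1 p2 : Y -> R) : Rbar :=
  match hA Lam p1 p2, hB Lam p1 p2 with
  | Finite a, Finite b =>
      if Rlt_dec 0 a then if Rlt_dec 0 b then Finite (ln (b / a)) else p_infty
      else p_infty
  | _, _ => p_infty
  end.

From Stdlib Require Import Reals List Lra Lia Permutation Classical ClassicalEpsilon.
From Coquelicot Require Import Coquelicot.
Open Scope R_scope.

(* By real induction on [0,1] and sequential compactness, curves lift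
      through the local homeomorphism F.  Lifting a minimizing geodesic from y to y' in the
      fibre over f x from each preimage of y pairs the d preimages of y with those of y'
      (lemma [pairing]): every pair is (Lc d(y,y'))-close, and by (A1)-(A2) all pairs but
      the at most q whose lift meets A are (gamma^{-1} d(y,y'))-close.
   2. Hölder estimate.  Summing over this pairing, the alpha-Hölder constant of L_x psi is
      at most zeta K times its lower bound d e^{inf phi} inf psi as soon as
      K diam(Y)^alpha >= 1, so L_x maps Lambda_K into Lambda_{zeta K} ([Lop_cone]).
   3. Hilbert metric.  Two positive elements of Lambda_{zeta K}, zeta < 1, satisfy
      tA phi1 <= phi2 <= tB phi1 in the order of Lambda_K with tB / tA bounded in terms of
      K, zeta and diam(Y) only ([hilbert_bound]); this bounds the diameter. *)

Lemma rpow_pos x a : 0 < x -> 0 < rpow x a.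
Proof. intros Hx. unfold rpow. destruct (Rlt_dec 0 x); [apply exp_pos | lra]. Qed.

Lemma rpow_nonneg x a : 0 <= rpow x a.
Proof. unfold rpow. destruct (Rlt_dec 0 x); [left; apply exp_pos | lra]. Qed.

Lemma rpow_zero a : rpow 0 a = 0.
Proof. unfold rpow. destruct (Rlt_dec 0 0); lra. Qed.

Lemma rpow_le x y a : 0 <= x <= y -> 0 <= a -> rpow x a <= rpow y a.
Proof.
  intros Hxy Ha. unfold rpow.
  destruct (Rlt_dec 0 x), (Rlt_dec 0 y); try lra.
  - apply Rle_Rpower_l; lra.
  - left; apply exp_pos.
Qed.

Lemma rpow_mul x y a : 0 <= x -> 0 <= y -> rpow (x * y) a = rpow x a * rpow y a.
Proof.
  intros [Hx|<-] [Hy|<-]; rewrite ?Rmult_0_l, ?Rmult_0_r, ?rpow_zero; try ring.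
  unfold rpow. destruct (Rlt_dec 0 (x * y)), (Rlt_dec 0 x), (Rlt_dec 0 y); try nra.
  symmetry; apply Rpower_mult_distr; assumption.
Qed.

Lemma rpow_inv x a : 0 < x -> rpow (/ x) a = rpow x (- a).
Proof.
  intros Hx. assert (0 < / x) by (apply Rinv_0_lt_compat; lra).
  unfold rpow. destruct (Rlt_dec 0 (/ x)), (Rlt_dec 0 x); try lra.
  unfold Rpower. rewrite ln_Rinv by lra. f_equal; ring.
Qed.

Lemma rpow_ge1 x a : 1 <= x -> 0 <= a -> 1 <= rpow x a.
Proof.
  intros Hx Ha. unfold rpow. destruct (Rlt_dec 0 x); [|lra].
  rewrite <- (Rpower_O x) by lra. apply Rle_Rpower; lra.
Qed.

Lemma rpow_le1 x a : 1 <= x -> a <= 0 -> rpow x a <= 1.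
Proof.
  intros Hx Ha. unfold rpow. destruct (Rlt_dec 0 x); [|lra].
  rewrite <- (Rpower_O x) by lra. apply Rle_Rpower; lra.
Qed.

Lemma lub_fin (E : R -> Prop) x0 b : E x0 -> (forall x, E x -> x <= b) ->
  Lub_Rbar E = Finite (real (Lub_Rbar E)) /\ (forall x, E x -> x <= real (Lub_Rbar E)) /\
  (forall c, (forall x, E x -> x <= c) -> real (Lub_Rbar E) <= c).
Proof.
  intros H0 Hb. destruct (Lub_Rbar_correct E) as [ub lub].
  destruct (Lub_Rbar E) as [r| |].
  - repeat split; [intros x Hx; exact (ub x Hx) | intros c Hc; exact (lub (Finite c) Hc)].
  - destruct (lub (Finite b) Hb).
  - destruct (ub x0 H0).
Qed.

Lemma glb_fin (E : R -> Prop) x0 b : E x0 -> (forall x, E x -> b <= x) ->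
  Glb_Rbar E = Finite (real (Glb_Rbar E)) /\ (forall x, E x -> real (Glb_Rbar E) <= x) /\
  (forall c, (forall x, E x -> c <= x) -> c <= real (Glb_Rbar E)).
Proof.
  intros H0 Hb. destruct (Glb_Rbar_correct E) as [lb glb].
  destruct (Glb_Rbar E) as [r| |].
  - repeat split; [intros x Hx; exact (lb x Hx) | intros c Hc; exact (glb (Finite c) Hc)].
  - destruct (lb x0 H0).
  - destruct (glb (Finite b) Hb).
Qed.

Lemma lub_elem (E : R -> Prop) x : E x -> Rbar_le x (Lub_Rbar E).
Proof. intros Hx. exact (proj1 (Lub_Rbar_correct E) x Hx). Qed.

Lemma lub_le (E : R -> Prop) b : (forall x, E x -> x <= b) -> Rbar_le (Lub_Rbar E) (Finite b).
Proof. intros Hb. exact (proj2 (Lub_Rbar_correct E) (Finite b) Hb). Qed.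

Lemma glb_elem (E : R -> Prop) x : E x -> Rbar_le (Glb_Rbar E) x.
Proof. intros Hx. exact (proj1 (Glb_Rbar_correct E) x Hx). Qed.

Section Metric.
Context {T : Type} (dist : T -> T -> R) (Hm : metric_space dist).

Lemma md_nonneg a b : 0 <= dist a b. Proof. apply Hm. Qed.
Lemma md_refl a : dist a a = 0. Proof. apply Hm; reflexivity. Qed.
Lemma md_sym a b : dist a b = dist b a. Proof. apply Hm. Qed.
Lemma md_tri a b c : dist a c <= dist a b + dist b c. Proof. apply Hm. Qed.
Lemma md_eq a b : dist a b = 0 -> a = b. Proof. apply Hm. Qed.

Lemma md_pos a b : a <> b -> 0 < dist a b.
Proof.
  intros Hab. destruct (md_nonneg a b) as [|E]; [assumption|].
  exfalso; apply Hab, md_eq; auto.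
Qed.

Lemma holder_semi_bound a h C : Rbar_le (holder_semi dist a h) (Finite C) ->
  forall z z', Rabs (h z - h z') <= C * rpow (dist z z') a.
Proof.
  intros HC z z'. destruct (classic (z = z')) as [<-|E].
  - rewrite md_refl, rpow_zero, Rminus_diag, Rabs_R0. lra.
  - assert (Hp := rpow_pos (dist z z') a (md_pos _ _ E)).
    assert (Hr : Rabs (h z - h z') / rpow (dist z z') a <= C).
    { apply (Rbar_le_trans _ _ _ (lub_elem _ _ (ex_intro _ z (ex_intro _ z' (conj E eq_refl)))) HC). }
    apply Rmult_le_reg_r with (/ rpow (dist z z') a); [apply Rinv_0_lt_compat; auto|].
    rewrite Rmult_assoc, Rinv_r by lra. lra.
Qed.

Lemma holder_semi_le a h C :
  (forall z z', z <> z' -> Rabs (h z - h z') <= C * rpow (dist z z') a) ->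
  Rbar_le (holder_semi dist a h) (Finite C).
Proof.
  intros Hh. apply lub_le. intros r [z [z' [E ->]]].
  assert (Hp := rpow_pos (dist z z') a (md_pos _ _ E)).
  apply Rmult_le_reg_r with (rpow (dist z z') a); auto.
  unfold Rdiv. rewrite Rmult_assoc, Rinv_l by lra. specialize (Hh z z' E). lra.
Qed.

End Metric.

Lemma incr_mono (p : nat -> nat) : (forall n, (p n < p (S n))%nat) ->
  forall a b, (a < b)%nat -> (p a < p b)%nat.
Proof. intros Hp a b Hab. induction Hab; [apply Hp | specialize (Hp m); lia]. Qed.

Lemma incr_ge (p : nat -> nat) : (forall n, (p n < p (S n))%nat) -> forall n, (n <= p n)%nat.
Proof. intros Hp n. induction n; [lia | specialize (Hp n); lia]. Qed.

Lemma subseq_conv {T} (dist : T -> T -> R) (u : nat -> T) l (p : nat -> nat) :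
  (forall n, (p n < p (S n))%nat) -> seq_converges dist u l ->
  seq_converges dist (fun n => u (p n)) l.
Proof.
  intros Hp Hc e He. destruct (Hc e He) as [N HN]. exists N. intros n Hn.
  apply HN. pose proof (incr_ge p Hp n). lia.
Qed.

Lemma inv_small (de : R) : 0 < de -> exists n1 : nat, forall k, (n1 <= k)%nat -> / INR (S k) < de.
Proof.
  intros Hde. destruct (INR_unbounded (/ de)) as [n1 Hn1]. exists n1. intros k Hk.
  assert (INR n1 <= INR k) by (apply le_INR; lia).
  assert (0 < / de) by (apply Rinv_0_lt_compat; lra).
  rewrite S_INR, <- (Rinv_inv de). apply Rinv_lt_contravar; nra.
Qed.

Section Compact.
Context {T : Type} (dist : T -> T -> R) (Hm : metric_space dist) (Hc : compact_space dist).

Lemma compact_bounded (y0 : T) : exists B, forall a b, dist a b <= B.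
Proof.
  destruct (classic (exists n : nat, forall u, dist y0 u <= INR n)) as [[n Hn]|Hn].
  - exists (2 * INR n). intros a b.
    pose proof (md_tri dist Hm a y0 b). rewrite (md_sym dist Hm a y0) in *.
    pose proof (Hn a). pose proof (Hn b). lra.
  - assert (Hfar : forall n : nat, exists u, INR n < dist y0 u).
    { intros n. apply NNPP; intro C. apply Hn. exists n. intros u.
      apply Rnot_lt_le. intro C'. apply C. eauto. }
    destruct (choice _ Hfar) as [u Hu].
    destruct (Hc u) as [p [l [Hp Hconv]]].
    destruct (Hconv 1 Rlt_0_1) as [N HN].
    destruct (INR_unbounded (dist y0 l + 1)) as [n0 Hn0].
    specialize (HN (max N n0) ltac:(lia)). specialize (Hu (p (max N n0))).
    assert (INR n0 <= INR (p (max N n0))).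
    { apply le_INR. pose proof (incr_ge p Hp (max N n0)). lia. }
    pose proof (md_tri dist Hm y0 l (u (p (max N n0)))). rewrite (md_sym dist Hm l) in *. lra.
Qed.

Lemma diam_prop (y0 : T) : 0 <= diam dist /\ forall a b, dist a b <= diam dist.
Proof.
  destruct (compact_bounded y0) as [B HB].
  destruct (lub_fin (fun r => exists a b, r = dist a b) (dist y0 y0) B) as [_ [Hub _]];
    [eauto | intros x [a [b ->]]; auto |].
  unfold diam. split.
  - rewrite <- (md_refl dist Hm y0). apply Hub. eauto.
  - intros a b. apply Hub. eauto.
Qed.

End Compact.

Lemma prod_metric {X Y} (dX : X -> X -> R) (dY : Y -> Y -> R) :
  metric_space dX -> metric_space dY -> metric_space (prod_dist dX dY).
Proof.
  intros HX HY. unfold prod_dist.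
  pose proof (md_nonneg dX HX) as NX. pose proof (md_nonneg dY HY) as NY.
  split; [|split; [|split]].
  - intros x y. specialize (NX (fst x) (fst y)). specialize (NY (snd x) (snd y)). lra.
  - intros [x1 y1] [x2 y2]; simpl. split.
    + intros E. specialize (NX x1 x2). specialize (NY y1 y2).
      f_equal; [apply (md_eq dX HX) | apply (md_eq dY HY)]; lra.
    + intros [= -> ->]. rewrite (md_refl dX HX), (md_refl dY HY). lra.
  - intros x y. rewrite (md_sym dX HX), (md_sym dY HY). reflexivity.
  - intros x y z. pose proof (md_tri dX HX (fst x) (fst y) (fst z)).
    pose proof (md_tri dY HY (snd x) (snd y) (snd z)). lra.
Qed.

Lemma prod_compact {X Y} (dX : X -> X -> R) (dY : Y -> Y -> R) :
  compact_space dX -> compact_space dY -> compact_space (prod_dist dX dY).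
Proof.
  intros HX HY u.
  destruct (HX (fun n => fst (u n))) as [p1 [lx [Hp1 Hc1]]].
  destruct (HY (fun n => snd (u (p1 n)))) as [p2 [ly [Hp2 Hc2]]].
  exists (fun n => p1 (p2 n)), (lx, ly). split.
  - intros n. apply incr_mono; auto.
  - intros e He.
    destruct (subseq_conv _ _ _ _ Hp2 Hc1 (e / 2) ltac:(lra)) as [N1 H1].
    destruct (Hc2 (e / 2) ltac:(lra)) as [N2 H2].
    exists (max N1 N2). intros n Hn. unfold prod_dist; simpl.
    specialize (H1 n ltac:(lia)). specialize (H2 n ltac:(lia)). simpl in *. lra.
Qed.

Lemma cont_ind (G : R -> Prop) : G 0 ->
  (forall T, 0 <= T <= 1 ->
     (forall de, 0 < de -> exists t', 0 <= t' <= T /\ T - de < t' /\ G t') ->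
     exists e, 0 < e /\ G (Rmin 1 (T + e))) ->
  G 1.
Proof.
  intros G0 Hstep. set (E := fun t => 0 <= t <= 1 /\ G t).
  destruct (completeness E) as [m [Hub Hlub]].
  - exists 1. intros t [Ht _]. lra.
  - exists 0. split; [lra | auto].
  - assert (Hm0 : 0 <= m) by (apply Hub; split; [lra | auto]).
    assert (Hm1 : m <= 1) by (apply Hlub; intros t [Ht _]; lra).
    destruct (Hstep m (conj Hm0 Hm1)) as [e [He Ge]].
    + intros de Hde. apply NNPP. intro C.
      assert (m <= m - de); [|lra].
      apply Hlub. intros t [Ht Gt]. apply Rnot_lt_le. intro C2. apply C.
      exists t. repeat split; try lra; auto. apply Hub; split; auto.
    + unfold Rmin in *. destruct (Rle_dec 1 (m + e)); auto.
      assert (m + e <= m) by (apply Hub; split; [lra | auto]). lra.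
Qed.

Lemma cont_ind_pt (P : R -> Prop) : P 0 ->
  (forall T, 0 <= T <= 1 -> exists de, 0 < de /\
     forall t', 0 <= t' <= T -> T - de < t' -> (forall s, 0 <= s <= t' -> P s) ->
     forall s, 0 <= s <= 1 -> Rabs (s - T) < de -> P s) ->
  forall s, 0 <= s <= 1 -> P s.
Proof.
  intros P0 Hstep.
  apply (cont_ind (fun t => forall s, 0 <= s <= t -> P s)).
  - intros s Hs. replace s with 0 by lra. auto.
  - intros T HT Hpre. destruct (Hstep T HT) as [de [Hde Hst]].
    destruct (Hpre de Hde) as [t' [Ht' [Ht'2 Gt']]].
    exists (de / 2). split; [lra|]. intros s Hs.
    assert (Hs' : s <= 1 /\ s <= T + de / 2)
      by (unfold Rmin in Hs; destruct (Rle_dec 1 (T + de / 2)); lra).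
    destruct (Rle_dec s t'); [apply Gt'; lra|].
    apply (Hst t' Ht' Ht'2 Gt'); [lra | apply Rabs_def1; lra].
Qed.

Lemma cont_ind_lc (P : R -> Prop) : P 0 ->
  (forall T, 0 <= T <= 1 -> exists de, 0 < de /\
     forall s, 0 <= s <= 1 -> Rabs (s - T) < de -> (P s <-> P T)) ->
  forall s, 0 <= s <= 1 -> P s.
Proof.
  intros P0 Hloc. apply cont_ind_pt; auto.
  intros T HT. destruct (Hloc T HT) as [de [Hde Hl]]. exists de. split; auto.
  intros t' Ht' Ht'2 Gt' s Hs Hst. apply (Hl s Hs Hst), (Hl t'); [lra | | apply Gt'; lra].
  apply Rabs_def1; lra.
Qed.

Definition cont_upto {T : Type} (dist : T -> T -> R) (u : R) (gm : R -> T) : Prop :=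
  forall t, 0 <= t <= u -> forall e, 0 < e -> exists de, 0 < de /\
    forall t', 0 <= t' <= u -> Rabs (t - t') < de -> dist (gm t) (gm t') < e.

Lemma glue_cont {T : Type} (dist : T -> T -> R) (W : R -> Prop) t' u (g1 g2 : R -> T) :
  0 <= t' <= u -> (forall t, t' <= t <= u -> W t) -> cont_upto dist t' g1 ->
  (forall t, W t -> forall e, 0 < e -> exists de, 0 < de /\
     forall s, W s -> Rabs (t - s) < de -> dist (g2 t) (g2 s) < e) ->
  g1 t' = g2 t' ->
  cont_upto dist u (fun t => if Rle_dec t t' then g1 t else g2 t).
Proof.
  intros Ht' HW C1 C2 E t Ht e He.
  destruct (Rle_dec t t') as [Hle|Hgt].
  - destruct (C1 t (conj (proj1 Ht) Hle) e He) as [de1 [Hde1 D1]].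
    destruct (Rlt_dec t t') as [Hlt|Heq].
    + exists (Rmin de1 (t' - t)). split; [apply Rmin_pos; lra|].
      intros s Hs Hts. pose proof (Rmin_l de1 (t' - t)). pose proof (Rmin_r de1 (t' - t)).
      apply Rabs_def2 in Hts.
      destruct (Rle_dec s t'); [apply D1; [lra | apply Rabs_def1; lra] | lra].
    + assert (t = t') by lra. subst t.
      destruct (C2 t' (HW t' ltac:(lra)) e He) as [de2 [Hde2 D2]].
      exists (Rmin de1 de2). split; [apply Rmin_pos; lra|].
      intros s Hs Hts. pose proof (Rmin_l de1 de2). pose proof (Rmin_r de1 de2).
      destruct (Rle_dec s t'); [apply D1; lra|].
      rewrite E. apply D2; [apply HW; lra | lra].
  - destruct (C2 t (HW t ltac:(lra)) e He) as [de2 [Hde2 D2]].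
    exists (Rmin de2 (t - t')). split; [apply Rmin_pos; lra|].
    intros s Hs Hts. pose proof (Rmin_l de2 (t - t')). pose proof (Rmin_r de2 (t - t')).
    apply Rabs_def2 in Hts.
    destruct (Rle_dec s t'); [lra|]. apply D2; [apply HW; lra | apply Rabs_def1; lra].
Qed.

Lemma compact_cluster {T : Type} (dist : T -> T -> R) (u : nat -> T) :
  compact_space dist -> exists l, forall r, 0 < r -> forall N, exists k,
    (N <= k)%nat /\ dist (u k) l < r.
Proof.
  intros Hc. destruct (Hc u) as [p [l [Hp Hconv]]]. exists l. intros r Hr N.
  destruct (Hconv r Hr) as [N1 HN1]. exists (p (max N N1)). split.
  - pose proof (incr_ge p Hp (max N N1)). lia.
  - apply HN1. lia.
Qed.

(* L * (e / (L + 1)) < e: the step size that makes an L-Lipschitz map move less than e. *)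
Lemma lip_small L e : 0 <= L -> 0 < e -> L * (e / (L + 1)) < e.
Proof.
  intros HL He. unfold Rdiv. rewrite <- Rmult_assoc.
  apply Rmult_lt_reg_r with (L + 1); [lra|]. rewrite Rmult_assoc, Rinv_l by lra. nra.
Qed.

Section Lifting.
Context {X Y : Type} {dX : X -> X -> R} {dY : Y -> Y -> R}
  {f : X -> X} {g : X -> Y -> Y} {d : nat} {preim : X -> Y -> list Y}
  {Lz : X * Y -> R} {gamma deltaf Lc : R} {A : X * Y -> Prop}
  {N : nat} {Ucov : nat -> X * Y -> Prop} {q : nat} {Aidx : list nat}
  {alpha : R} {phi : X * Y -> R} {eps : R}
  (H : Setting dX dY f g d preim Lz gamma deltaf Lc A N Ucov q Aidx alpha phi eps).

Local Notation dZ := (prod_dist dX dY).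
Local Notation F := (skewF f g).

Lemma Zm : metric_space dZ.
Proof. apply prod_metric; [apply (sX_metric H) | apply (sY_metric H)]. Qed.

Lemma Zc : compact_space dZ.
Proof. apply prod_compact; [apply (sX_compact H) | apply (sY_compact H)]. Qed.

Lemma F_lip : exists C, 0 <= C /\ forall a b, dZ (F a) (F b) <= C * dZ a b.
Proof.
  destruct (sF_lip H) as [C HC]. exists (Rmax C 0). split; [apply Rmax_r|].
  intros a b. specialize (HC a b). pose proof (md_nonneg _ Zm a b).
  assert (C * dZ a b <= Rmax C 0 * dZ a b) by (apply Rmult_le_compat_r; [lra | apply Rmax_l]).
  lra.
Qed.

Lemma loc_inv (w : X * Y) : exists (U : X * Y -> Prop) r rho (G : X * Y -> X * Y),
  0 < r /\ 0 < rho /\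
  (forall u, dZ w u < r -> U u) /\
  (forall u u', U u -> U u' -> F u = F u' -> u = u') /\
  (forall v, dZ (F w) v < rho -> U (G v) /\ F (G v) = v) /\
  (forall v, dZ (F w) v < rho -> forall e, 0 < e -> exists de, 0 < de /\
      forall v', dZ (F w) v' < rho -> dZ v v' < de -> dZ (G v) (G v') < e).
Proof.
  destruct (sF_localhomeo H w) as [U [HUo [HUw [Hinj [HFUo Hcont]]]]].
  destruct (HUo w HUw) as [r [Hr Hball]].
  destruct (HFUo (F w) (ex_intro _ w (conj HUw eq_refl))) as [rho [Hrho Hball2]].
  assert (Hch : forall v, exists u, (exists u0, U u0 /\ v = F u0) -> U u /\ F u = v).
  { intros v. destruct (classic (exists u0, U u0 /\ v = F u0)) as [[u0 [Hu0 ->]]|Hn].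
    - exists u0. auto.
    - exists w. intro C; contradiction. }
  destruct (choice _ Hch) as [G HG].
  exists U, r, rho, G. repeat split; auto.
  - apply HG, Hball2; assumption.
  - apply HG, Hball2; assumption.
  - intros v Hv e He. destruct (HG v (Hball2 v Hv)) as [HGv HFv].
    destruct (Hcont (G v) HGv e He) as [de [Hde Hd]]. exists de. split; auto.
    intros v' Hv' Hvv'. destruct (HG v' (Hball2 v' Hv')) as [HGv' HFv'].
    apply Hd; auto. rewrite HFv, HFv'. exact Hvv'.
Qed.

Definition partial_lift (c : R -> X * Y) (w0 : X * Y) (u : R) (gm : R -> X * Y) : Prop :=
  gm 0 = w0 /\ cont_upto dZ u gm /\ forall t, 0 <= t <= u -> F (gm t) = c t.

Section PathLifting.
Variables (c : R -> X * Y) (L : R) (w0 : X * Y).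
Hypothesis HL : 0 <= L.
Hypothesis Hc : forall s t, 0 <= s <= 1 -> 0 <= t <= 1 -> dZ (c s) (c t) <= L * Rabs (s - t).

Lemma approx_lifts T : 0 <= T <= 1 ->
  (forall de, 0 < de -> exists t', 0 <= t' <= T /\ T - de < t' /\
     exists gm, partial_lift c w0 t' gm) ->
  exists ws, F ws = c T /\ forall r de, 0 < r -> 0 < de -> exists t' gm,
    0 <= t' <= T /\ T - de < t' /\ partial_lift c w0 t' gm /\ dZ (gm t') ws < r.
Proof.
  intros HT Hpre.
  assert (Hseq : forall n : nat, exists p : R * (R -> X * Y),
    0 <= fst p <= T /\ T - / INR (S n) < fst p /\ partial_lift c w0 (fst p) (snd p)).
  { intros n. assert (0 < / INR (S n)) by (apply Rinv_0_lt_compat, lt_0_INR; lia).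
    destruct (Hpre _ H0) as [t' [Ht' [Ht'2 [gm Hgm]]]]. exists (t', gm). auto. }
  destruct (choice _ Hseq) as [pf Hpf].
  destruct (compact_cluster _ (fun n => snd (pf n) (fst (pf n))) Zc) as [ws Hws].
  assert (Happrox : forall r de, 0 < r -> 0 < de -> exists t' gm,
    0 <= t' <= T /\ T - de < t' /\ partial_lift c w0 t' gm /\ dZ (gm t') ws < r).
  { intros r de Hr Hde. destruct (inv_small de Hde) as [n1 Hn1].
    destruct (Hws r Hr n1) as [k [Hk Hdk]]. specialize (Hn1 k Hk).
    destruct (Hpf k) as [Hk1 [Hk2 Hk3]].
    exists (fst (pf k)), (snd (pf k)). split; [exact Hk1 | split; [lra | split; assumption]]. }
  exists ws. split; [|exact Happrox].
  destruct F_lip as [C [HC0 HC]].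
  apply (md_eq _ Zm), Rle_antisym; [|apply (md_nonneg _ Zm)].
  apply Rle_plus_epsilon. intros e He. rewrite Rplus_0_l.
  destruct (Happrox (e / 2 / (C + 1)) (e / 2 / (L + 1))) as [t' [gm [Ht' [Ht'2 [[_ [_ HF]] Hd]]]]];
    try (apply Rdiv_lt_0_compat; lra).
  pose proof (md_tri _ Zm (F ws) (F (gm t')) (c T)) as Htri.
  pose proof (HC ws (gm t')) as HCw. rewrite (md_sym _ Zm ws) in HCw.
  rewrite HF in Htri, HCw by lra.
  pose proof (Hc t' T ltac:(lra) HT) as Hct.
  assert (C * dZ (gm t') ws <= C * (e / 2 / (C + 1))) by (apply Rmult_le_compat_l; lra).
  assert (L * Rabs (t' - T) <= L * (e / 2 / (L + 1)))
    by (apply Rmult_le_compat_l; [lra | rewrite Rabs_left1 by lra; lra]).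
  pose proof (lip_small C (e / 2) HC0 ltac:(lra)).
  pose proof (lip_small L (e / 2) HL ltac:(lra)).
  lra.
Qed.

Lemma local_lift T ws : 0 <= T <= 1 -> F ws = c T ->
  exists (U : X * Y -> Prop) r dc (G : X * Y -> X * Y), 0 < r /\ 0 < dc /\
  (forall u, dZ ws u < r -> U u) /\
  (forall u u', U u -> U u' -> F u = F u' -> u = u') /\
  (forall t, 0 <= t <= 1 -> Rabs (t - T) < dc -> U (G (c t)) /\ F (G (c t)) = c t) /\
  (forall t, 0 <= t <= 1 /\ Rabs (t - T) < dc -> forall e, 0 < e -> exists de, 0 < de /\
     forall s, 0 <= s <= 1 /\ Rabs (s - T) < dc -> Rabs (t - s) < de ->
     dZ (G (c t)) (G (c s)) < e).
Proof.
  intros HT HFws.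
  destruct (loc_inv ws) as [U [r [rho [G [Hr [Hrho [HUball [Hinj [HG HGc]]]]]]]]].
  set (dc := rho / (L + 1)).
  assert (Hdc : 0 < dc) by (apply Rdiv_lt_0_compat; lra).
  assert (Hnear : forall t, 0 <= t <= 1 -> Rabs (t - T) < dc -> dZ (F ws) (c t) < rho).
  { intros t Ht Htt. rewrite HFws. pose proof (Hc T t HT Ht).
    rewrite Rabs_minus_sym in Htt.
    assert (L * Rabs (T - t) <= L * dc) by (apply Rmult_le_compat_l; lra).
    pose proof (lip_small L rho HL Hrho). fold dc in H2. lra. }
  exists U, r, dc, G. repeat split; auto; try (apply HG, Hnear; assumption).
  intros t [Ht Htt] e He. destruct (HGc (c t) (Hnear t Ht Htt) e He) as [de1 [Hde1 Hd1]].
  exists (de1 / (L + 1)). split; [apply Rdiv_lt_0_compat; lra|].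
  intros s [Hs Hst] Hts. apply Hd1; [apply Hnear; auto|].
  pose proof (Hc t s Ht Hs).
  assert (L * Rabs (t - s) <= L * (de1 / (L + 1))) by (apply Rmult_le_compat_l; lra).
  pose proof (lip_small L de1 HL Hde1). lra.
Qed.

Lemma lift_exists : F w0 = c 0 -> exists gm, partial_lift c w0 1 gm.
Proof.
  intros Hw0. apply cont_ind.
  - exists (fun _ => w0). split; [reflexivity | split].
    + intros t Ht e He. exists 1. split; [lra|]. intros. rewrite (md_refl _ Zm). lra.
    + intros t Ht. replace t with 0 by lra. auto.
  - intros T HT Hpre.
    destruct (approx_lifts T HT Hpre) as [ws [HFws Happrox]].
    destruct (local_lift T ws HT HFws) as [U [r [dc [G [Hr [Hdc [HUball [Hinj [HG HGc]]]]]]]]].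
    destruct (Happrox r dc Hr Hdc) as [t' [gm [Ht' [Ht'2 [[G0 [Gc GF]] Hend]]]]].
    assert (Hwin : Rabs (t' - T) < dc) by (rewrite Rabs_left1 by lra; lra).
    assert (Hmeet : gm t' = G (c t')).
    { destruct (HG t' ltac:(lra) Hwin) as [HU1 HF1]. apply Hinj; auto.
      - apply HUball. rewrite (md_sym _ Zm). exact Hend.
      - rewrite HF1, GF; auto. lra. }
    set (u := Rmin 1 (T + dc / 2)).
    assert (Hu : u <= 1 /\ u <= T + dc / 2 /\ T <= u)
      by (unfold u, Rmin; destruct (Rle_dec 1 (T + dc / 2)); lra).
    exists (dc / 2). split; [lra|]. fold u.
    exists (fun t => if Rle_dec t t' then gm t else G (c t)). split; [|split].
    + simpl. destruct (Rle_dec 0 t'); [exact G0 | lra].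
    + apply (glue_cont _ (fun t => 0 <= t <= 1 /\ Rabs (t - T) < dc)); auto.
      * lra.
      * intros t Ht. split; [lra | apply Rabs_def1; lra].
    + intros t Ht. destruct (Rle_dec t t'); [apply GF; lra|].
      apply HG; [lra | apply Rabs_def1; lra].
Qed.

End PathLifting.
End Lifting.

Section LiftProperties.
Context {X Y : Type} {dX : X -> X -> R} {dY : Y -> Y -> R}
  {f : X -> X} {g : X -> Y -> Y} {d : nat} {preim : X -> Y -> list Y}
  {Lz : X * Y -> R} {gamma deltaf Lc : R} {A : X * Y -> Prop}
  {N : nat} {Ucov : nat -> X * Y -> Prop} {q : nat} {Aidx : list nat}
  {alpha : R} {phi : X * Y -> R} {eps : R}
  (H : Setting dX dY f g d preim Lz gamma deltaf Lc A N Ucov q Aidx alpha phi eps).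

Local Notation dZ := (prod_dist dX dY).
Local Notation F := (skewF f g).

Lemma lift_agree_loc (c : R -> X * Y) g1 g2 :
  lift_of dX dY f g c g1 -> lift_of dX dY f g c g2 ->
  forall s0, 0 <= s0 <= 1 -> exists de, 0 < de /\ forall s, 0 <= s <= 1 ->
    Rabs (s - s0) < de -> (g1 s = g2 s <-> g1 s0 = g2 s0).
Proof.
  intros [C1 F1] [C2 F2] s0 Hs0.
  destruct (classic (g1 s0 = g2 s0)) as [E|E].
  - destruct (loc_inv H (g1 s0)) as [U [r [rho [G [Hr [_ [HUb [Hinj _]]]]]]]].
    destruct (C1 s0 Hs0 r Hr) as [d1 [Hd1 D1]]. destruct (C2 s0 Hs0 r Hr) as [d2 [Hd2 D2]].
    exists (Rmin d1 d2). split; [apply Rmin_pos; auto|]. intros s Hs Hss.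
    pose proof (Rmin_l d1 d2). pose proof (Rmin_r d1 d2). rewrite Rabs_minus_sym in Hss.
    split; auto. intros _. apply Hinj.
    + apply HUb, D1; auto; lra.
    + apply HUb. rewrite E. apply D2; auto; lra.
    + rewrite F1, F2; auto.
  - assert (Hp := md_pos _ (Zm H) _ _ E). set (eta := dZ (g1 s0) (g2 s0)) in *.
    destruct (C1 s0 Hs0 (eta / 2) ltac:(lra)) as [d1 [Hd1 D1]].
    destruct (C2 s0 Hs0 (eta / 2) ltac:(lra)) as [d2 [Hd2 D2]].
    exists (Rmin d1 d2). split; [apply Rmin_pos; auto|]. intros s Hs Hss.
    pose proof (Rmin_l d1 d2). pose proof (Rmin_r d1 d2). rewrite Rabs_minus_sym in Hss.
    split; [|intro; contradiction]. intro Es. exfalso.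
    specialize (D1 s Hs ltac:(lra)). specialize (D2 s Hs ltac:(lra)).
    pose proof (md_tri _ (Zm H) (g1 s0) (g1 s) (g2 s0)) as Htri.
    rewrite Es in Htri, D1. rewrite (md_sym _ (Zm H) (g2 s)) in Htri. fold eta in Htri. lra.
Qed.

Lemma lift_unique_end (c : R -> X * Y) g1 g2 :
  lift_of dX dY f g c g1 -> lift_of dX dY f g c g2 -> g1 1 = g2 1 -> g1 0 = g2 0.
Proof.
  intros L1 L2 E1.
  assert (Hback : forall t, 0 <= t <= 1 -> g1 (1 - t) = g2 (1 - t)).
  { apply cont_ind_lc; [rewrite Rminus_0_r; exact E1|].
    intros T HT. destruct (lift_agree_loc c g1 g2 L1 L2 (1 - T) ltac:(lra)) as [de [Hde Hl]].
    exists de. split; auto. intros s Hs Hst. apply Hl; [lra|].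
    replace (1 - s - (1 - T)) with (- (s - T)) by ring. rewrite Rabs_Ropp. auto. }
  specialize (Hback 1 ltac:(lra)). rewrite Rminus_diag in Hback. exact Hback.
Qed.

(* A lift of a curve in the fibre over f x0 that starts in the fibre over x0 stays in
   it: the base component is locally constant because f is expanding, hence locally
   injective. *)
Lemma lift_fst (c : R -> X * Y) gm (x0 : X) :
  lift_of dX dY f g c gm -> (forall t, 0 <= t <= 1 -> fst (c t) = f x0) ->
  fst (gm 0) = x0 -> forall t, 0 <= t <= 1 -> fst (gm t) = x0.
Proof.
  intros [Cg Fg] Hc H0. apply cont_ind_lc; auto.
  intros T HT. destruct (Cg T HT deltaf (s_deltaf H)) as [de [Hde D]].
  exists de. split; auto. intros s Hs Hst.
  assert (E : fst (gm s) = fst (gm T)); [|rewrite E; tauto].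
  specialize (D s Hs ltac:(rewrite Rabs_minus_sym; auto)). unfold prod_dist in D.
  pose proof (md_nonneg _ (sY_metric H) (snd (gm T)) (snd (gm s))).
  pose proof (s_expanding H (fst (gm T)) (fst (gm s)) ltac:(lra)) as Hexp.
  assert (Ef : f (fst (gm T)) = f (fst (gm s))).
  { pose proof (f_equal fst (Fg T HT)) as A1. pose proof (f_equal fst (Fg s Hs)) as A2.
    simpl in A1, A2. rewrite A1, A2, !Hc; auto. }
  rewrite Ef, (md_refl _ (sX_metric H)) in Hexp.
  pose proof (md_nonneg _ (sX_metric H) (fst (gm T)) (fst (gm s))). pose proof (s_gamma H).
  symmetry. apply (md_eq _ (sX_metric H)), Rle_antisym; nra.
Qed.

Lemma lift_dist (c : R -> X * Y) gm (Lam D : R) :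
  0 <= Lam -> 0 <= D -> lift_of dX dY f g c gm ->
  (forall s t, 0 <= s <= 1 -> 0 <= t <= 1 -> dZ (c s) (c t) <= D * Rabs (s - t)) ->
  (forall t, 0 <= t <= 1 -> Lz (gm t) <= Lam) ->
  dZ (gm 0) (gm 1) <= Lam * D.
Proof.
  intros HL HD [Cg Fg] Hc HLz. unfold cont_on01, in01 in Cg, Fg.
  assert (K : forall s, 0 <= s <= 1 -> dZ (gm 0) (gm s) <= Lam * D * s).
  { apply cont_ind_pt; [rewrite (md_refl _ (Zm H)); lra|].
    intros T HT. destruct (sL_branch H (gm T)) as [U [HUo [HUz [_ HUl]]]].
    destruct (HUo _ HUz) as [r [Hr Hb]].
    destruct (Cg T HT r Hr) as [de [Hde D1]]. exists de. split; auto.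
    intros t' Ht' Ht'2 Good s Hs Hst.
    destruct (Rle_dec s t') as [Hle|Hgt]; [apply Good; lra|].
    assert (Ut : U (gm t')) by (apply Hb, D1; [lra | apply Rabs_def1; lra]).
    assert (Us : U (gm s)) by (apply Hb, D1; [lra | rewrite Rabs_minus_sym; auto]).
    pose proof (HUl _ _ Ut Us) as Hbr. rewrite !Fg in Hbr by lra.
    pose proof (Hc t' s ltac:(lra) Hs) as Hcs. rewrite Rabs_minus_sym, Rabs_right in Hcs by lra.
    pose proof (md_nonneg _ (Zm H) (c t') (c s)).
    assert (Lz (gm T) * dZ (c t') (c s) <= Lam * dZ (c t') (c s))
      by (apply Rmult_le_compat_r; auto).
    assert (Lam * dZ (c t') (c s) <= Lam * (D * (s - t'))) by (apply Rmult_le_compat_l; auto).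
    pose proof (Good t' ltac:(lra)).
    pose proof (md_tri _ (Zm H) (gm 0) (gm t') (gm s)). nra. }
  specialize (K 1 ltac:(lra)). lra.
Qed.

End LiftProperties.

Section Pairing.
Context {X Y : Type} {dX : X -> X -> R} {dY : Y -> Y -> R}
  {f : X -> X} {g : X -> Y -> Y} {d : nat} {preim : X -> Y -> list Y}
  {Lz : X * Y -> R} {gamma deltaf Lc : R} {A : X * Y -> Prop}
  {N : nat} {Ucov : nat -> X * Y -> Prop} {q : nat} {Aidx : list nat}
  {alpha : R} {phi : X * Y -> R} {eps : R}
  (H : Setting dX dY f g d preim Lz gamma deltaf Lc A N Ucov q Aidx alpha phi eps).

Local Notation dZ := (prod_dist dX dY).
Local Notation F := (skewF f g).

Lemma fiber_geodesic (x : X) (y y' : Y) : exists c : R -> X * Y,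
  min_geodesic dZ c /\ c 0 = (f x, y) /\ c 1 = (f x, y') /\ (forall t, fst (c t) = f x) /\
  forall s t, 0 <= s <= 1 -> 0 <= t <= 1 -> dZ (c s) (c t) <= dY y y' * Rabs (s - t).
Proof.
  destruct (sY_geodesic H y y') as [cY [HcY [Hc0 Hc1]]].
  assert (Hcd : forall s t, in01 s -> in01 t ->
    dZ (f x, cY s) (f x, cY t) = Rabs (s - t) * dY y y').
  { intros s t Hs Ht. unfold prod_dist; simpl.
    rewrite (md_refl _ (sX_metric H)), HcY, Hc0, Hc1 by auto. ring. }
  exists (fun t => (f x, cY t)). repeat split; simpl; try congruence.
  - intros s t Hs Ht. rewrite !Hcd by (auto; red; lra).
    replace (Rabs (0 - 1)) with 1; [ring|].
    rewrite Rabs_minus_sym, Rminus_0_r, Rabs_R1; reflexivity.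
  - intros s t Hs Ht. rewrite Hcd by auto. lra.
Qed.

Lemma fiber_lifts (x : X) (y : Y) (c : R -> X * Y) (D : R) : 0 <= D ->
  c 0 = (f x, y) -> (forall t, fst (c t) = f x) ->
  (forall s t, 0 <= s <= 1 -> 0 <= t <= 1 -> dZ (c s) (c t) <= D * Rabs (s - t)) ->
  exists lift : Y -> R -> X * Y, forall a, In a (preim x y) ->
    lift a 0 = (x, a) /\ lift_of dX dY f g c (lift a) /\
    forall t, 0 <= t <= 1 -> lift a t = (x, snd (lift a t)).
Proof.
  intros HD Hc0 Hfst Hc.
  assert (Hl : forall a, exists gm, In a (preim x y) ->
    gm 0 = (x, a) /\ lift_of dX dY f g c gm).
  { intros a. destruct (classic (In a (preim x y))) as [Ha|Ha].
    - assert (Hover : F (x, a) = c 0).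
      { unfold skewF; simpl. rewrite Hc0. f_equal. apply (s_preim H), Ha. }
      destruct (lift_exists H c D (x, a) HD Hc Hover) as [gm [G0 [Gc GF]]].
      exists gm. intros _. repeat split; auto.
    - exists (fun _ => (x, a)). intro; contradiction. }
  destruct (choice _ Hl) as [lift Hlift]. exists lift. intros a Ha.
  destruct (Hlift a Ha) as [L0 Ll]. split; [exact L0 | split; [exact Ll|]].
  intros t Ht. assert (E : fst (lift a t) = x).
  { apply (lift_fst H c (lift a) x Ll); [intros; apply Hfst | rewrite L0; reflexivity | exact Ht]. }
  destruct (lift a t) as [u v]. simpl in *. congruence.
Qed.

(* A lift "touches A" when it meets the region where inverse branches may expand. *)
Definition touches (gm : R -> X * Y) : Prop := exists t, 0 <= t <= 1 /\ A (gm t).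

Definition touchesb (gm : R -> X * Y) : bool :=
  if excluded_middle_informative (touches gm) then true else false.

Section Endpoints.
Variables (x : X) (y y' : Y) (c : R -> X * Y) (lift : Y -> R -> X * Y).
Hypothesis Hgeod : min_geodesic dZ c.
Hypothesis Hc1 : c 1 = (f x, y').
Hypothesis Hc : forall s t, 0 <= s <= 1 -> 0 <= t <= 1 -> dZ (c s) (c t) <= dY y y' * Rabs (s - t).
Hypothesis Hlift : forall a, In a (preim x y) ->
  lift a 0 = (x, a) /\ lift_of dX dY f g c (lift a) /\
  forall t, 0 <= t <= 1 -> lift a t = (x, snd (lift a t)).

Definition endpoint (a : Y) : Y := snd (lift a 1).

Lemma endpoint_in a : In a (preim x y) -> In (endpoint a) (preim x y').
Proof.
  intros Ha. destruct (Hlift a Ha) as [_ [[_ LF] Hfib]].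
  apply (s_preim H). pose proof (LF 1 ltac:(red; lra)) as E.
  rewrite (Hfib 1 ltac:(lra)), Hc1 in E. unfold skewF in E; simpl in E.
  injection E as E. exact E.
Qed.

Lemma endpoint_inj a b : In a (preim x y) -> In b (preim x y) ->
  endpoint a = endpoint b -> a = b.
Proof.
  intros Ha Hb E. destruct (Hlift a Ha) as [La0 [La Fa]]. destruct (Hlift b Hb) as [Lb0 [Lb Fb]].
  assert (E1 : lift a 1 = lift b 1).
  { rewrite (Fa 1), (Fb 1) by lra. unfold endpoint in E. rewrite E. reflexivity. }
  pose proof (lift_unique_end H c _ _ La Lb E1) as E0.
  rewrite La0, Lb0 in E0. injection E0 as E0. exact E0.
Qed.

(* At most q lifts touch A: A is covered by q sets of the cover, each of which meets at
   most one lift of the geodesic c, and distinct lifts are distinct curves. *)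
Lemma touching_count :
  (length (filter (fun a => touchesb (lift a)) (preim x y)) <= q)%nat.
Proof.
  destruct (s_Aidx H) as [HAnd [HAlen HAlt]].
  destruct (s_preim H x y) as [HPnd _].
  assert (Hix : forall a, exists i, touches (lift a) ->
    In i Aidx /\ exists t, 0 <= t <= 1 /\ Ucov i (lift a t)).
  { intros a. destruct (classic (touches (lift a))) as [[t [Ht HA]]|Hn].
    - destruct (s_A_cov H _ HA) as [i [Hi HU]]. exists i. intros _. split; eauto.
    - exists 0%nat. intro; contradiction. }
  destruct (choice _ Hix) as [idx Hidx].
  assert (Hfil : forall a, In a (filter (fun a => touchesb (lift a)) (preim x y)) <->
    In a (preim x y) /\ touches (lift a)).
  { intros a. rewrite filter_In. unfold touchesb.
    destruct (excluded_middle_informative (touches (lift a))); intuition congruence. }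
  rewrite <- HAlen, <- (length_map idx). apply NoDup_incl_length.
  - apply FinFun.Injective_map_NoDup_in; [|apply NoDup_filter, HPnd].
    intros a b Ha Hb E. apply Hfil in Ha as [Ha Ta]. apply Hfil in Hb as [Hb Tb].
    destruct (Hidx a Ta) as [Ia [ta [Hta Ua]]]. destruct (Hidx b Tb) as [_ [tb [Htb Ub]]].
    destruct (Hlift a Ha) as [La0 [La _]]. destruct (Hlift b Hb) as [Lb0 [Lb _]].
    rewrite <- E in Ub.
    pose proof (s_geod_lift H (HAlt _ Ia) Hgeod La Lb (ex_intro _ ta (conj Hta Ua))
      (ex_intro _ tb (conj Htb Ub)) (conj (Rle_refl 0) Rle_0_1)) as E0.
    rewrite La0, Lb0 in E0. injection E0 as E0. exact E0.
  - intros i Hi. apply in_map_iff in Hi as [a [<- Ha]]. apply Hfil in Ha as [_ Ta].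
    apply (Hidx a Ta).
Qed.

(* Each preimage moves by at most Lc * dY y y'; one whose lift avoids A moves by at
   most dY y y' / gamma (assumption (A1) along the lift). *)
Lemma endpoint_dist a (Lam : R) : In a (preim x y) -> 0 <= Lam ->
  (forall t, 0 <= t <= 1 -> Lz (lift a t) <= Lam) -> dY a (endpoint a) <= Lam * dY y y'.
Proof.
  intros Ha HLam HLz. destruct (Hlift a Ha) as [La0 [La Fa]].
  assert (E : dY a (endpoint a) = dZ (lift a 0) (lift a 1)).
  { unfold endpoint. rewrite La0, (Fa 1) by lra. unfold prod_dist; simpl.
    rewrite (md_refl _ (sX_metric H)). ring. }
  rewrite E. apply (lift_dist H c); auto. apply (md_nonneg _ (sY_metric H)).
Qed.

Lemma endpoint_dist_all a : In a (preim x y) -> dY a (endpoint a) <= Lc * dY y y'.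
Proof.
  intros Ha. pose proof (s_gamma H). pose proof (s_Lc H).
  assert (/ gamma < 1) by (rewrite <- Rinv_1; apply Rinv_lt_contravar; lra).
  apply endpoint_dist; auto; [lra|]. intros t _.
  destruct (classic (A (lift a t))) as [HA|HA].
  - apply (s_A1_in H); auto.
  - pose proof (s_A1_out H _ HA). lra.
Qed.

Lemma endpoint_dist_avoid a : In a (preim x y) -> touchesb (lift a) = false ->
  dY a (endpoint a) <= / gamma * dY y y'.
Proof.
  intros Ha Hn. pose proof (s_gamma H).
  apply endpoint_dist; auto; [left; apply Rinv_0_lt_compat; lra|]. intros t Ht.
  destruct (classic (A (lift a t))) as [HA|HA].
  - unfold touchesb in Hn. destruct (excluded_middle_informative (touches (lift a))) as [_|Hno];
      [discriminate | destruct Hno; exists t; auto].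
  - left. apply (s_A1_out H _ HA).
Qed.

End Endpoints.

Lemma pairing (x : X) (y y' : Y) : exists (sig : Y -> Y) (exc : Y -> bool),
  (forall a, In a (preim x y) -> In (sig a) (preim x y')) /\
  (forall a b, In a (preim x y) -> In b (preim x y) -> sig a = sig b -> a = b) /\
  (length (filter exc (preim x y)) <= q)%nat /\
  (forall a, In a (preim x y) -> dY a (sig a) <= Lc * dY y y') /\
  (forall a, In a (preim x y) -> exc a = false -> dY a (sig a) <= / gamma * dY y y').
Proof.
  destruct (fiber_geodesic x y y') as [c [Hgeod [Hc0 [Hc1 [Hfst Hc]]]]].
  destruct (fiber_lifts x y c (dY y y') (md_nonneg _ (sY_metric H) y y') Hc0 Hfst Hc)
    as [lift Hlift].
  exists (endpoint lift), (fun a => touchesb (lift a)). repeat split.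
  - intros a. eapply endpoint_in; eauto.
  - intros a b. eapply endpoint_inj; eauto.
  - eapply touching_count; eauto.
  - intros a. eapply endpoint_dist_all; eauto.
  - intros a. eapply endpoint_dist_avoid; eauto.
Qed.

End Pairing.

Definition sumL (l : list R) : R := fold_right Rplus 0 l.

Lemma fold_sumL {T} (h : T -> R) l :
  fold_right (fun a acc => h a + acc) 0 l = sumL (map h l).
Proof. induction l as [|a l IH]; simpl; [reflexivity | rewrite IH; reflexivity]. Qed.

Lemma sumL_perm l1 l2 : Permutation l1 l2 -> sumL l1 = sumL l2.
Proof. induction 1; unfold sumL in *; simpl; lra. Qed.

Lemma sumL_le {T} (h1 h2 : T -> R) l : (forall a, In a l -> h1 a <= h2 a) ->
  sumL (map h1 l) <= sumL (map h2 l).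
Proof.
  induction l as [|a l IH]; simpl; intros Hl; [lra|].
  pose proof (Hl a (or_introl eq_refl)). pose proof (IH (fun b Hb => Hl b (or_intror Hb))).
  unfold sumL in *. lra.
Qed.

Lemma sumL_abs {T} (h1 h2 : T -> R) l :
  Rabs (sumL (map h1 l) - sumL (map h2 l)) <= sumL (map (fun a => Rabs (h1 a - h2 a)) l).
Proof.
  induction l as [|a l IH]; simpl; [rewrite Rminus_0_r, Rabs_R0; lra|].
  unfold sumL in *.
  replace (h1 a + fold_right Rplus 0 (map h1 l) - (h2 a + fold_right Rplus 0 (map h2 l)))
    with ((h1 a - h2 a) + (fold_right Rplus 0 (map h1 l) - fold_right Rplus 0 (map h2 l)))
    by ring.
  pose proof (Rabs_triang (h1 a - h2 a)
    (fold_right Rplus 0 (map h1 l) - fold_right Rplus 0 (map h2 l))). lra.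
Qed.

Lemma sumL_const {T} (c : R) (l : list T) : sumL (map (fun _ => c) l) = INR (length l) * c.
Proof.
  induction l as [|a l IH]; [simpl; ring|].
  change (c + sumL (map (fun _ => c) l) = INR (S (length l)) * c).
  rewrite IH, S_INR. ring.
Qed.

Lemma sumL_plus {T} (h1 h2 : T -> R) l :
  sumL (map (fun a => h1 a + h2 a) l) = sumL (map h1 l) + sumL (map h2 l).
Proof. induction l as [|a l IH]; simpl; [ring|]. unfold sumL in *. rewrite IH. ring. Qed.

Lemma sumL_scal {T} (c : R) (h : T -> R) l :
  sumL (map (fun a => c * h a) l) = c * sumL (map h l).
Proof. induction l as [|a l IH]; simpl; [ring|]. unfold sumL in *. rewrite IH. ring. Qed.

Lemma sumL_indicator {T} (p : T -> bool) l :
  sumL (map (fun a => if p a then 1 else 0) l) = INR (length (filter p l)).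
Proof.
  induction l as [|a l IH]; [reflexivity|].
  change ((if p a then 1 else 0) + sumL (map (fun a => if p a then 1 else 0) l) =
          INR (length (filter p (a :: l)))).
  rewrite IH. simpl. destruct (p a); simpl length; [rewrite S_INR|]; ring.
Qed.

Lemma sumL_reindex {T} (h : T -> R) (sig : T -> T) (P P' : list T) :
  NoDup P -> NoDup P' -> length P = length P' ->
  (forall a, In a P -> In (sig a) P') ->
  (forall a b, In a P -> In b P -> sig a = sig b -> a = b) ->
  sumL (map h P') = sumL (map (fun a => h (sig a)) P).
Proof.
  intros HP HP' Hlen Hin Hinj.
  assert (Hperm : Permutation (map sig P) P').
  { apply NoDup_Permutation_bis.
    - apply FinFun.Injective_map_NoDup_in; auto.
    - rewrite length_map; lia.
    - intros b Hb. apply in_map_iff in Hb as [a [<- Ha]]. auto. }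
  rewrite <- (map_map sig h). symmetry. apply sumL_perm, Permutation_map, Hperm.
Qed.

Lemma count_bound {T} (w : T -> R) (P : list T) (exc : T -> bool) (a0 b : R) (q : nat) :
  (length (filter exc P) <= q)%nat -> (q <= length P)%nat -> a0 <= b ->
  (forall a, In a P -> w a <= b) -> (forall a, In a P -> exc a = false -> w a <= a0) ->
  sumL (map w P) <= (INR (length P) - INR q) * a0 + INR q * b.
Proof.
  intros Hexc Hq Hab Hb Ha.
  assert (Hsum : sumL (map w P) <= sumL (map (fun a => a0 + (b - a0) * (if exc a then 1 else 0)) P)).
  { apply sumL_le. intros a HaP. destruct (exc a) eqn:E.
    - specialize (Hb a HaP). lra.
    - specialize (Ha a HaP E). lra. }
  rewrite sumL_plus, sumL_const, sumL_scal, sumL_indicator in Hsum.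
  assert (INR (length (filter exc P)) <= INR q) by (apply le_INR; auto).
  assert ((b - a0) * INR (length (filter exc P)) <= (b - a0) * INR q)
    by (apply Rmult_le_compat_l; lra).
  lra.
Qed.

Lemma cone_le_pointwise {T : Type} (Lam : (T -> R) -> Prop) p1 p2 :
  (forall h, Lam h -> forall y, 0 <= h y) -> cone_le Lam p1 p2 -> forall y, p1 y <= p2 y.
Proof. intros Hnn [Hle|Hle] y; [pose proof (Hnn _ Hle y) | specialize (Hle y)]; simpl in *; lra. Qed.

Lemma hilbert_theta_le {T : Type} (Lam : (T -> R) -> Prop) p1 p2 (y0 : T) tA tB :
  (forall h, Lam h -> forall y, 0 <= h y) -> 0 < p1 y0 -> 0 < p2 y0 -> 0 < tA -> 0 < tB ->
  Lam (fun y => p2 y - tA * p1 y) -> Lam (fun y => tB * p1 y - p2 y) ->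
  Rbar_le (hilbert_theta Lam p1 p2) (Finite (ln (tB / tA))).
Proof.
  intros Hnn P1 P2 HtA HtB CA CB.
  set (ratio := p2 y0 / p1 y0).
  assert (Hratio : 0 < ratio) by (apply Rdiv_lt_0_compat; auto).
  assert (Hlow : forall t, cone_le Lam (fun y => t * p1 y) p2 -> t <= ratio).
  { intros t Hle. pose proof (cone_le_pointwise Lam _ _ Hnn Hle y0) as Hy. simpl in Hy.
    unfold ratio. apply Rmult_le_reg_r with (p1 y0); auto.
    unfold Rdiv. rewrite Rmult_assoc, Rinv_l; lra. }
  assert (Hup : forall t, cone_le Lam p2 (fun y => t * p1 y) -> ratio <= t).
  { intros t Hle. pose proof (cone_le_pointwise Lam _ _ Hnn Hle y0) as Hy. simpl in Hy.
    unfold ratio. apply Rmult_le_reg_r with (p1 y0); auto.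
    unfold Rdiv. rewrite Rmult_assoc, Rinv_l; lra. }
  destruct (lub_fin (fun t => 0 < t /\ cone_le Lam (fun y => t * p1 y) p2) tA ratio)
    as [EA [EA2 _]]; [split; [auto | left; exact CA] | intros t [_ Ht]; auto |].
  destruct (glb_fin (fun t => 0 < t /\ cone_le Lam p2 (fun y => t * p1 y)) tB ratio)
    as [EB [EB2 EB3]]; [split; [auto | left; exact CB] | intros t [_ Ht]; auto |].
  unfold hilbert_theta, hA, hB. rewrite EA, EB.
  set (a := real (Lub_Rbar _)). set (b := real (Glb_Rbar _)).
  assert (Ha : tA <= a) by (apply EA2; split; [auto | left; exact CA]).
  assert (Hb : b <= tB) by (apply EB2; split; [auto | left; exact CB]).
  assert (Hb0 : ratio <= b) by (apply EB3; intros t [_ Ht]; auto).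
  destruct (Rlt_dec 0 a); [|lra]. destruct (Rlt_dec 0 b); [|lra]. simpl.
  apply ln_le; [apply Rdiv_lt_0_compat; lra|].
  apply Rle_trans with (tB / a); unfold Rdiv.
  - apply Rmult_le_compat_r; [left; apply Rinv_0_lt_compat|]; lra.
  - apply Rmult_le_compat_l; [lra | apply Rinv_le_contravar; lra].
Qed.

Section Cone.
Context {T : Type} (dist : T -> T -> R) (Hm : metric_space dist) (Hc : compact_space dist)
  (alpha : R) (Ha : 0 < alpha).

Lemma cone_facts K psi (y0 : T) : 0 <= K -> (forall y, 0 < psi y) ->
  Rbar_le (holder_semi dist alpha psi) (Rbar_mult (Finite K) (inf_fun psi)) ->
  inf_fun psi = Finite (real (inf_fun psi)) /\ (forall y, real (inf_fun psi) <= psi y) /\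
  0 < real (inf_fun psi) /\
  (forall a b, Rabs (psi a - psi b) <= K * real (inf_fun psi) * rpow (dist a b) alpha) /\
  (forall b, psi b <= real (inf_fun psi) * (1 + K * rpow (diam dist) alpha)).
Proof.
  intros HK Hp Hs.
  destruct (glb_fin (fun r => exists z, r = psi z) (psi y0) 0) as [E1 [E2 E3]];
    [eauto | intros r [z ->]; left; auto |].
  unfold inf_fun in *. set (m := real (Glb_Rbar (fun r => exists z, r = psi z))) in *.
  rewrite E1 in Hs. simpl in Hs.
  assert (Hh := holder_semi_bound dist Hm alpha psi (K * m) Hs).
  assert (Hm0 : 0 <= m) by (apply E3; intros r [z ->]; left; auto).
  destruct (diam_prop dist Hm Hc y0) as [HD0 HD].
  assert (Hup : forall b, psi b <= m * (1 + K * rpow (diam dist) alpha)).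
  { intros b. assert (psi b - K * m * rpow (diam dist) alpha <= m); [|lra].
    apply E3. intros r [a ->]. specialize (Hh b a). apply Rabs_le_between in Hh.
    assert (rpow (dist b a) alpha <= rpow (diam dist) alpha)
      by (apply rpow_le; [split; [apply (md_nonneg _ Hm) | apply HD] | lra]).
    assert (K * m * rpow (dist b a) alpha <= K * m * rpow (diam dist) alpha)
      by (apply Rmult_le_compat_l; auto; apply Rmult_le_pos; auto).
    lra. }
  split; [auto | split; [intros y; apply E2; eauto | split; [|split; auto]]].
  destruct Hm0 as [Hm0|Hm0]; auto. exfalso. specialize (Hup y0). rewrite <- Hm0 in Hup.
  specialize (Hp y0). lra.
Qed.

Lemma cone_intro K h m0 (y0 : T) : 0 <= K -> (forall y, m0 <= h y) -> (forall y, 0 < h y) ->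
  (forall a b, a <> b -> Rabs (h a - h b) <= K * m0 * rpow (dist a b) alpha) ->
  cone dist alpha K h.
Proof.
  intros HK Hm0 Hp Hh. left. split; auto. split; [exists (K * m0); auto|].
  destruct (glb_fin (fun r => exists z, r = h z) (h y0) m0) as [E1 [_ E3]];
    [eauto | intros r [z ->]; auto |].
  unfold inf_fun. rewrite E1. simpl. apply holder_semi_le; auto.
  intros a b Hab. specialize (Hh a b Hab).
  assert (m0 <= real (Glb_Rbar (fun r => exists z, r = h z))) by (apply E3; intros r [z ->]; auto).
  assert (K * m0 * rpow (dist a b) alpha <=
          K * real (Glb_Rbar (fun r => exists z, r = h z)) * rpow (dist a b) alpha)
    by (apply Rmult_le_compat_r; [apply rpow_nonneg | apply Rmult_le_compat_l; auto]).
  lra.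
Qed.

Lemma cone_nonneg K h : cone dist alpha K h -> forall y, 0 <= h y.
Proof. intros [[Hp _]|Hz] y; [left; auto | rewrite Hz; lra]. Qed.

Lemma cone_difference K z tau c t u v mu mv h (y0 : T) :
  0 <= K -> 0 <= z -> 0 < tau < 1 -> z * (1 + tau) = 1 - tau -> 1 <= c -> 0 <= t ->
  0 < mu -> 0 <= mv -> t * (c * mv) <= tau * mu ->
  (forall y, mu <= u y) -> (forall y, 0 <= v y <= c * mv) ->
  (forall a b, Rabs (u a - u b) <= z * K * mu * rpow (dist a b) alpha) ->
  (forall a b, Rabs (v a - v b) <= z * K * mv * rpow (dist a b) alpha) ->
  (forall y, h y = u y - t * v y) ->
  cone dist alpha K h.
Proof.
  intros HK Hz Htau Hzt Hc1 Ht Hmu Hmv Hgap Hu Hv Hhu Hhv Eh.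
  assert (Htm : t * mv <= tau * mu).
  { assert (t * mv <= t * (c * mv)) by (apply Rmult_le_compat_l; nra). lra. }
  assert (Hlow : forall y, (1 - tau) * mu <= h y).
  { intros y. rewrite Eh. specialize (Hu y). specialize (Hv y).
    assert (t * v y <= t * (c * mv)) by (apply Rmult_le_compat_l; lra). lra. }
  apply (cone_intro K h ((1 - tau) * mu) y0); auto.
  - intros y. specialize (Hlow y). nra.
  - intros a b _. rewrite !Eh. specialize (Hhu a b). specialize (Hhv a b).
    pose proof (rpow_nonneg (dist a b) alpha) as Hr. set (r := rpow (dist a b) alpha) in *.
    replace (u a - t * v a - (u b - t * v b)) with ((u a - u b) - t * (v a - v b)) by ring.
    pose proof (Rabs_triang (u a - u b) (- (t * (v a - v b)))) as Htri.
    rewrite Rabs_Ropp, Rabs_mult, (Rabs_right t) in Htri by lra.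
    assert (t * Rabs (v a - v b) <= t * (z * K * mv * r)) by (apply Rmult_le_compat_l; lra).
    assert (z * K * r * (t * mv) <= z * K * r * (tau * mu))
      by (apply Rmult_le_compat_l; [apply Rmult_le_pos; [apply Rmult_le_pos|]|]; lra).
    replace (K * ((1 - tau) * mu) * r) with (z * K * mu * r + z * K * r * (tau * mu))
      by (rewrite <- Hzt; ring).
    unfold Rminus in *. nra.
Qed.

Lemma hilbert_bound K z phi1 phi2 (y0 : T) : 0 < K -> 0 < z < 1 ->
  (forall y, 0 < phi1 y) -> (forall y, 0 < phi2 y) ->
  Rbar_le (holder_semi dist alpha phi1) (Rbar_mult (Finite (z * K)) (inf_fun phi1)) ->
  Rbar_le (holder_semi dist alpha phi2) (Rbar_mult (Finite (z * K)) (inf_fun phi2)) ->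
  Rbar_le (hilbert_theta (cone dist alpha K) phi1 phi2)
    (Finite (ln ((1 + z * K * rpow (diam dist) alpha) ^ 2 / ((1 - z) / (1 + z)) ^ 2))).
Proof.
  intros HK Hz P1 P2 S1 S2.
  assert (HzK : 0 <= z * K) by nra.
  destruct (cone_facts (z * K) phi1 y0 HzK P1 S1) as [_ [B1 [M1 [H1 U1]]]].
  destruct (cone_facts (z * K) phi2 y0 HzK P2 S2) as [_ [B2 [M2 [H2 U2]]]].
  set (m1 := real (inf_fun phi1)) in *. set (m2 := real (inf_fun phi2)) in *.
  set (c := 1 + z * K * rpow (diam dist) alpha) in *.
  assert (Hc1 : 1 <= c) by (unfold c; pose proof (rpow_nonneg (diam dist) alpha); nra).
  set (tau := (1 - z) / (1 + z)).
  assert (Htau : 0 < tau < 1).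
  { unfold tau. split; [apply Rdiv_lt_0_compat; lra|].
    apply Rmult_lt_reg_r with (1 + z); [lra|].
    unfold Rdiv. rewrite Rmult_assoc, Rinv_l by lra. lra. }
  assert (Hzt : z * (1 + tau) = 1 - tau) by (unfold tau; field; lra).
  set (tA := tau * m2 / (c * m1)). set (tB := c * m2 / (tau * m1)).
  assert (HtA : 0 < tA) by (unfold tA; apply Rdiv_lt_0_compat; nra).
  assert (HtB : 0 < tB) by (unfold tB; apply Rdiv_lt_0_compat; nra).
  replace (c ^ 2 / tau ^ 2) with (tB / tA) by (unfold tA, tB; field; split; lra).
  apply (hilbert_theta_le _ _ _ y0); auto.
  - apply cone_nonneg.
  - apply (cone_difference K z tau c tA phi2 phi1 m2 m1 _ y0); auto; try lra.
    + unfold tA. right. field. split; lra.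
    + intros y. split; [left; auto | specialize (U1 y); lra].
  - apply (cone_difference K z tau c 1 (fun y => tB * phi1 y) phi2 (tB * m1) m2 _ y0);
      auto; try lra; try nra.
    + unfold tB. right. field. split; lra.
    + intros y. specialize (B1 y). apply Rmult_le_compat_l; lra.
    + intros y. split; [left; auto | specialize (U2 y); lra].
    + intros a b. rewrite <- Rmult_minus_distr_l, Rabs_mult, (Rabs_right tB) by lra.
      replace (z * K * (tB * m1) * rpow (dist a b) alpha)
        with (tB * (z * K * m1 * rpow (dist a b) alpha)) by ring.
      apply Rmult_le_compat_l; [lra | apply H1].
    + intros y. simpl. ring.
Qed.

End Cone.

(* The weighted count (d - q) gamma^{-alpha} + q Lc^alpha of the pairing; by definition
   s = e^eps * contraction_sum / d. *)
Definition contraction_sum (d q : nat) (gamma Lc alpha : R) : R :=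
  (INR d - INR q) * rpow gamma (- alpha) + INR q * rpow Lc alpha.

Lemma zeta_absorbs {Y : Type} (dY : Y -> Y -> R) (d q : nat) (gamma Lc alpha eps e K m : R) :
  (0 < d)%nat -> 0 <= contraction_sum d q gamma Lc alpha -> 0 <= eps -> 0 < e -> 0 <= K ->
  0 <= m -> 1 <= K * rpow (diam dY) alpha ->
  m * e * (exp eps * K + eps * (1 + K * rpow (diam dY) alpha)) * contraction_sum d q gamma Lc alpha
  <= zeta_const dY d q gamma Lc alpha eps * K * (INR d * (e * m)).
Proof.
  intros Hd HS Heps He HK Hm HKR.
  set (S := contraction_sum d q gamma Lc alpha) in *. set (R := rpow (diam dY) alpha) in *.
  set (E := exp eps). set (s := s_const d q gamma Lc alpha eps).
  assert (Hd0 : 0 < INR d) by (apply lt_0_INR; lia).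
  assert (Hs : S * E = s * INR d) by (unfold s, s_const, S, contraction_sum, E; field; lra).
  assert (HE1 : 1 <= E) by (unfold E; pose proof (exp_ineq1_le eps); lra).
  assert (HSs : S <= s * INR d) by (rewrite <- Hs; nra).
  unfold zeta_const. fold s R.
  assert (Heps2 : eps * (1 + K * R) * S <= eps * (2 * K * R) * (s * INR d)).
  { apply Rmult_le_compat; [nra | lra | nra | lra]. }
  assert (Hme : 0 <= m * e) by nra.
  replace (m * e * (E * K + eps * (1 + K * R)) * S)
    with (m * e * (K * (S * E) + eps * (1 + K * R) * S)) by ring.
  rewrite Hs.
  replace ((s + 2 * s * eps * R) * K * (INR d * (e * m)))
    with (m * e * (K * (s * INR d) + eps * (2 * K * R) * (s * INR d))) by ring.
  apply Rmult_le_compat_l; lra.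
Qed.

Section Transfer.
Context {X Y : Type} {dX : X -> X -> R} {dY : Y -> Y -> R}
  {f : X -> X} {g : X -> Y -> Y} {d : nat} {preim : X -> Y -> list Y}
  {Lz : X * Y -> R} {gamma deltaf Lc : R} {A : X * Y -> Prop}
  {N : nat} {Ucov : nat -> X * Y -> Prop} {q : nat} {Aidx : list nat}
  {alpha : R} {phi : X * Y -> R} {eps : R}
  (H : Setting dX dY f g d preim Lz gamma deltaf Lc A N Ucov q Aidx alpha phi eps).

Local Notation dZ := (prod_dist dX dY).

Lemma phi_facts (z0 : X * Y) :
  (forall z, real (inf_fun phi) <= phi z) /\ (forall z, phi z < real (inf_fun phi) + eps) /\
  (forall z z', Rabs (exp (phi z) - exp (phi z')) <=
                eps * exp (real (inf_fun phi)) * rpow (dZ z z') alpha).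
Proof.
  pose proof (s_P1 H) as P1. pose proof (s_P2 H) as P2.
  assert (Hs : forall z, Rbar_le (phi z) (sup_fun phi)) by (intros z; apply lub_elem; eauto).
  assert (Hi : forall z, Rbar_le (inf_fun phi) (phi z)) by (intros z; apply glb_elem; eauto).
  pose proof (Hs z0) as Hs0. pose proof (Hi z0) as Hi0.
  destruct (sup_fun phi) as [Ms| |]; [| destruct (inf_fun phi); contradiction | contradiction].
  destruct (inf_fun phi) as [ms| |]; try contradiction.
  simpl in *. split; [|split].
  - exact Hi.
  - intros z. specialize (Hs z). simpl in Hs. lra.
  - intros z z'. apply (holder_semi_bound dZ (Zm H) alpha (fun z => exp (phi z))).
    apply Rbar_lt_le. exact P2.
Qed.

(* The constants of the pairing are positive: at least d - q > 0 preimages contract. *)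
Lemma contraction_sum_pos : 0 < contraction_sum d q gamma Lc alpha.
Proof.
  unfold contraction_sum. pose proof (s_q H) as Hq. apply lt_INR in Hq.
  pose proof (pos_INR q). pose proof (rpow_pos gamma (- alpha) ltac:(pose proof (s_gamma H); lra)).
  pose proof (rpow_nonneg Lc alpha). nra.
Qed.

Lemma zeta_pos : 0 < zeta_const dY d q gamma Lc alpha eps.
Proof.
  pose proof (s_q H). assert (0 < INR d) by (apply lt_0_INR; lia).
  assert (Hs : 0 < s_const d q gamma Lc alpha eps).
  { unfold s_const. fold (contraction_sum d q gamma Lc alpha).
    pose proof contraction_sum_pos. pose proof (exp_pos eps).
    apply Rdiv_lt_0_compat; [apply Rmult_lt_0_compat|]; auto. }
  unfold zeta_const. pose proof (s_eps H). pose proof (rpow_nonneg (diam dY) alpha).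
  assert (0 <= 2 * s_const d q gamma Lc alpha eps * eps * rpow (diam dY) alpha)
    by (apply Rmult_le_pos; [apply Rmult_le_pos|]; lra).
  lra.
Qed.

Lemma Lop_zero x psi : (forall y, psi y = 0) -> forall y, Lop preim phi x psi y = 0.
Proof.
  intros Hz y. unfold Lop. induction (preim x y) as [|a l IH]; simpl; auto.
  rewrite IH, Hz. ring.
Qed.

Lemma Lop_sum x psi y :
  Lop preim phi x psi y = sumL (map (fun a => exp (phi (x, a)) * psi a) (preim x y)).
Proof. apply (fold_sumL (fun a => exp (phi (x, a)) * psi a)). Qed.

Lemma Lop_lower x psi m y : 0 <= m -> (forall y, m <= psi y) ->
  INR d * (exp (real (inf_fun phi)) * m) <= Lop preim phi x psi y.
Proof.
  intros Hm0 Hm. destruct (phi_facts (x, y)) as [F1 _].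
  rewrite Lop_sum. destruct (s_preim H x y) as [_ [Hlen _]].
  rewrite <- Hlen, <- sumL_const. apply sumL_le. intros a _.
  apply Rmult_le_compat; auto; [left; apply exp_pos|].
  destruct (F1 (x, a)) as [Hlt|<-]; [left; apply exp_increasing, Hlt | lra].
Qed.

Lemma term_est x psi K m (a b : Y) : 0 <= K -> 0 <= m -> (forall y, 0 <= psi y) ->
  (forall a b, Rabs (psi a - psi b) <= K * m * rpow (dY a b) alpha) ->
  (forall b, psi b <= m * (1 + K * rpow (diam dY) alpha)) ->
  Rabs (exp (phi (x, a)) * psi a - exp (phi (x, b)) * psi b) <=
    m * exp (real (inf_fun phi)) * (exp eps * K + eps * (1 + K * rpow (diam dY) alpha))
    * rpow (dY a b) alpha.
Proof.
  intros HK Hm Hp Hh Hu.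
  destruct (phi_facts (x, a)) as [_ [F2 F3]].
  set (e := exp (real (inf_fun phi))) in *. set (E := exp eps).
  set (R := rpow (diam dY) alpha) in *. set (r := rpow (dY a b) alpha).
  assert (Hr : 0 <= r) by apply rpow_nonneg.
  assert (HR : 0 <= R) by apply rpow_nonneg.
  assert (Hea : exp (phi (x, a)) <= e * E).
  { unfold e, E. rewrite <- exp_plus. left. apply exp_increasing, F2. }
  assert (Hd : dZ (x, a) (x, b) = dY a b).
  { unfold prod_dist; simpl. rewrite (md_refl _ (sX_metric H)). ring. }
  specialize (F3 (x, a) (x, b)). rewrite Hd in F3. fold r in F3.
  specialize (Hh a b). fold r in Hh. specialize (Hu b). pose proof (Hp b) as Hpb.
  replace (exp (phi (x, a)) * psi a - exp (phi (x, b)) * psi b) with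
    (exp (phi (x, a)) * (psi a - psi b) + psi b * (exp (phi (x, a)) - exp (phi (x, b))))
    by ring.
  eapply Rle_trans; [apply Rabs_triang|].
  rewrite !Rabs_mult, (Rabs_right (exp _)) by (left; apply exp_pos).
  rewrite (Rabs_right (psi b)) by lra.
  assert (exp (phi (x, a)) * Rabs (psi a - psi b) <= e * E * (K * m * r))
    by (apply Rmult_le_compat; auto; [left; apply exp_pos | apply Rabs_pos]).
  assert (psi b * Rabs (exp (phi (x, a)) - exp (phi (x, b))) <= m * (1 + K * R) * (eps * e * r))
    by (apply Rmult_le_compat; auto; apply Rabs_pos).
  replace (m * e * (E * K + eps * (1 + K * R)) * r)
    with (e * E * (K * m * r) + m * (1 + K * R) * (eps * e * r)) by ring.
  lra.
Qed.

Lemma pairing_sum x (y y' : Y) (sig : Y -> Y) (exc : Y -> bool) :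
  (length (filter exc (preim x y)) <= q)%nat ->
  (forall a, In a (preim x y) -> dY a (sig a) <= Lc * dY y y') ->
  (forall a, In a (preim x y) -> exc a = false -> dY a (sig a) <= / gamma * dY y y') ->
  sumL (map (fun a => rpow (dY a (sig a)) alpha) (preim x y))
    <= contraction_sum d q gamma Lc alpha * rpow (dY y y') alpha.
Proof.
  intros Hexc Hall Havoid.
  pose proof (s_alpha H) as Hal. pose proof (s_gamma H) as Hg. pose proof (s_Lc H) as HLc.
  pose proof (md_nonneg _ (sY_metric H) y y') as HD0.
  destruct (s_preim H x y) as [_ [HPlen _]].
  set (D := rpow (dY y y') alpha).
  assert (Hg1 : rpow gamma (- alpha) <= 1) by (apply rpow_le1; lra).
  assert (HL1 : 1 <= rpow Lc alpha) by (apply rpow_ge1; lra).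
  assert (HD : 0 <= D) by apply rpow_nonneg.
  assert (Hginv : 0 < / gamma) by (apply Rinv_0_lt_compat; lra).
  eapply Rle_trans.
  - apply (count_bound _ _ exc (rpow gamma (- alpha) * D) (rpow Lc alpha * D) q Hexc).
    + pose proof (s_q H). lia.
    + apply Rmult_le_compat_r; lra.
    + intros a Ha. unfold D. rewrite <- rpow_mul by lra. apply rpow_le; [|lra].
      split; [apply (md_nonneg _ (sY_metric H)) | apply Hall; auto].
    + intros a Ha Hn. unfold D. rewrite <- rpow_inv, <- rpow_mul by lra.
      apply rpow_le; [|lra].
      split; [apply (md_nonneg _ (sY_metric H)) | apply Havoid; auto].
  - rewrite HPlen. unfold contraction_sum. lra.
Qed.

Lemma Lop_est x psi K m (y y' : Y) : 0 <= K -> 0 <= m -> (forall y, 0 <= psi y) ->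
  (forall a b, Rabs (psi a - psi b) <= K * m * rpow (dY a b) alpha) ->
  (forall b, psi b <= m * (1 + K * rpow (diam dY) alpha)) ->
  1 <= K * rpow (diam dY) alpha ->
  Rabs (Lop preim phi x psi y - Lop preim phi x psi y') <=
    zeta_const dY d q gamma Lc alpha eps * K * (INR d * (exp (real (inf_fun phi)) * m))
    * rpow (dY y y') alpha.
Proof.
  intros HK Hm Hp Hh Hu HKR.
  destruct (pairing H x y y') as [sig [exc [S1 [S2 [S3 [S4 S5]]]]]].
  destruct (s_preim H x y) as [HPnd [HPlen _]]. destruct (s_preim H x y') as [HPnd' [HPlen' _]].
  set (Bc := m * exp (real (inf_fun phi)) *
             (exp eps * K + eps * (1 + K * rpow (diam dY) alpha))).
  assert (HBc : 0 <= Bc).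
  { unfold Bc. pose proof (exp_pos (real (inf_fun phi))). pose proof (exp_pos eps).
    pose proof (rpow_nonneg (diam dY) alpha). pose proof (s_eps H).
    apply Rmult_le_pos; [apply Rmult_le_pos|]; nra. }
  pose proof contraction_sum_pos as HS.
  rewrite !Lop_sum.
  rewrite (sumL_reindex (fun a => exp (phi (x, a)) * psi a) sig (preim x y) (preim x y'));
    auto; [|congruence].
  eapply Rle_trans; [apply sumL_abs|].
  eapply Rle_trans; [apply (sumL_le _ (fun a => Bc * rpow (dY a (sig a)) alpha)) |].
  { intros a _. apply term_est; auto. }
  rewrite sumL_scal.
  eapply Rle_trans; [apply Rmult_le_compat_l; [exact HBc | apply (pairing_sum x y y' sig exc); auto]|].
  rewrite <- Rmult_assoc. apply Rmult_le_compat_r; [apply rpow_nonneg|].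
  apply zeta_absorbs; auto; [pose proof (s_q H); lia | lra | left; apply (s_eps H) | apply exp_pos].
Qed.

Lemma Lop_cone K x psi : 0 < K ->
  (0 < rpow (diam dY) alpha -> 1 <= K * rpow (diam dY) alpha) ->
  cone dY alpha K psi -> cone dY alpha (zeta_const dY d q gamma Lc alpha eps * K) (Lop preim phi x psi).
Proof.
  intros HK HKR [[Hp [_ Hs]]|Hzero]; [|right; apply Lop_zero; auto].
  destruct (classic (exists y0 : Y, True)) as [[y0 _]|Hne]; [|right; intros y; destruct Hne; eauto].
  pose proof (s_alpha H) as Hal. pose proof (sY_metric H) as HY. pose proof (sY_compact H) as HYc.
  destruct (cone_facts dY HY HYc alpha ltac:(lra) K psi y0 ltac:(lra) Hp Hs)
    as [_ [B [Mpos [Hh Hu]]]].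
  set (m := real (inf_fun psi)) in *.
  pose proof zeta_pos as Hz.
  assert (Hlow : forall y, INR d * (exp (real (inf_fun phi)) * m) <= Lop preim phi x psi y)
    by (intros y; apply Lop_lower; [lra | auto]).
  apply (cone_intro dY HY alpha _ _ (INR d * (exp (real (inf_fun phi)) * m)) y0); auto.
  - nra.
  - intros y. eapply Rlt_le_trans; [|apply Hlow].
    pose proof (s_q H). assert (0 < INR d) by (apply lt_0_INR; lia).
    pose proof (exp_pos (real (inf_fun phi))). apply Rmult_lt_0_compat; nra.
  - intros a b Hab. apply Lop_est; auto; try lra; [intros y; left; auto|].
    apply HKR. apply rpow_pos. apply (md_pos _ HY) in Hab.
    destruct (diam_prop dY HY HYc a) as [_ HD]. specialize (HD a b). lra.
Qed.

End Transfer.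

Theorem lemma3p3 (X Y : Type) (dX : X -> X -> R) (dY : Y -> Y -> R)
  (f : X -> X) (g : X -> Y -> Y) (d : nat) (preim : X -> Y -> list Y)
  (Lz : X * Y -> R) (gamma deltaf Lc : R) (A : X * Y -> Prop)
  (N : nat) (Ucov : nat -> X * Y -> Prop) (q : nat) (Aidx : list nat)
  (alpha : R) (phi : X * Y -> R) (eps : R) :
  Setting dX dY f g d preim Lz gamma deltaf Lc A N Ucov q Aidx alpha phi eps ->
  exists K0 : R, forall K : R, 0 < K -> K0 <= K ->
    (forall (x : X) (psi : Y -> R), cone dY alpha K psi ->
       cone dY alpha (zeta_const dY d q gamma Lc alpha eps * K) (Lop preim phi x psi)) /\
    (exists M : R, forall (x : X) (psi1 psi2 : Y -> R),
       cone dY alpha K psi1 -> cone dY alpha K psi2 ->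
       (exists y, Lop preim phi x psi1 y <> 0) ->
       (exists y, Lop preim phi x psi2 y <> 0) ->
       Rbar_le (hilbert_theta (cone dY alpha K) (Lop preim phi x psi1) (Lop preim phi x psi2))
               (Finite M)).
Proof.
  intros H.
  set (RR := rpow (diam dY) alpha). set (z := zeta_const dY d q gamma Lc alpha eps).
  exists (if Rlt_dec 0 RR then / RR else 0). intros K HK HK0.
  (* K >= 1 / diam(Y)^alpha makes the Hölder part of the cone estimate absorbable. *)
  assert (HKR : 0 < RR -> 1 <= K * RR).
  { intros HR. destruct (Rlt_dec 0 RR); [|lra].
    rewrite <- (Rinv_l RR) by lra. apply Rmult_le_compat_r; lra. }
  assert (Hinv : forall x psi, cone dY alpha K psi -> cone dY alpha (z * K) (Lop preim phi x psi))
    by (intros x psi; apply (Lop_cone H); auto).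
  split; [exact Hinv|].
  (* The images lie in the narrower cone Lambda_{zeta K}, zeta < 1, whose Hilbert diameter
     in Lambda_K is finite. *)
  exists (ln ((1 + z * K * RR) ^ 2 / ((1 - z) / (1 + z)) ^ 2)).
  intros x psi1 psi2 C1 C2 [y1 N1] [y2 N2].
  destruct (Hinv x psi1 C1) as [[Q1 [_ S1]]|Z1]; [|destruct (N1 (Z1 y1))].
  destruct (Hinv x psi2 C2) as [[Q2 [_ S2]]|Z2]; [|destruct (N2 (Z2 y2))].
  pose proof (s_alpha H). pose proof (s_zeta H).
  pose proof (zeta_pos H).
  apply (hilbert_bound dY (sY_metric H) (sY_compact H) alpha ltac:(lra) K z _ _ y1); auto.
Qed.
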